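(* Let $1\le k<m$ and let $H$ be a $k$-uniform hypergraph on $m$ vertices that is non-empty (has at least one edge) and non-complete (does not contain all $k$-subsets as edges). Then the number of automorphisms of $H$ satisfies $|\mathrm{Aut}(H)|\le \dfrac{m!}{m-k+1}$.
   Context: A hypergraph $H=(V,E)$ is $k$-uniform if every edge $e\in E$ is a subset of $V$ of size exactly $k$. An automorphism of $H$ is a permutation $\pi$ of $V$ such that $\{\pi(e):e\in E\}=E$; $\mathrm{Aut}(H)$ is the set of all automorphisms. *)

From mathcomp Require Import all_boot all_fingroup.
Local Open Scope nat_scope.
Set Implicit Arguments. Unset Strict Implicit. Unset Printing Implicit Defensive.

Definition k_uniform (m k : nat) (E : {set {set 'I_m}}) : Prop :=
  forall e, e \in E -> #|e| = k.

Definition hypAut (m : nat) (E : {set {set 'I_m}}) : {set {perm 'I_m}} :=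
  [set pi : {perm 'I_m} | imset (fun e : {set 'I_m} => [set pi x | x in e]) (mem E) == E].

From mathcomp Require Import all_boot all_fingroup.
From mathcomp Require Import zify.
Set Implicit Arguments. Unset Strict Implicit. Unset Printing Implicit Defensive.

(* Permutations act on edge sets by mapping every edge, and Aut(H) is the
   stabiliser of E.  If pi and sigma lie in the same coset Aut(H) * sigma
   they move E to the same edge set, so any family (s x)_(x in T) of
   permutations producing pairwise distinct images of E gives an injection
   (g, x) |-> g * s x of Aut(H) x T into Sym(m); hence
   |Aut(H)| * |T| <= m!  (lemma [card_hypAut_mul_le]).

   To build such a family with |T| = m - k + 1 we walk from an edge to a
   non-edge by single-vertex exchanges and find a (k-1)-set S with vertices
   a, b outside S such that a + S is an edge and b + S is not
   ([exchange_witness]).  Let P be the link {z | z + S in E}.  For each x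
   outside S a transposition [sep x] (or the identity) fixing S modifies P
   in a way that determines x ([sep_link_inj]); reading the link of S in
   the moved edge set ([link_act]) shows that the images of E are distinct. *)

Definition act m (pi : {perm 'I_m}) (F : {set {set 'I_m}}) : {set {set 'I_m}} :=
  [set pi @: e | e : {set 'I_m} in F].

(* [act] is a right action: g * s means first g, then s. *)
Lemma actM m (g s : {perm 'I_m}) (F : {set {set 'I_m}}) :
  act (g * s)%g F = act s (act g F).
Proof.
rewrite /act -imset_comp; apply: eq_imset => e /=.
by rewrite -imset_comp; apply: eq_imset => x /=; rewrite permM.
Qed.

Lemma act_hypAutM m (E : {set {set 'I_m}}) (g s : {perm 'I_m}) :
  g \in hypAut E -> act (g * s)%g E = act s E.
Proof.
move=> gA; rewrite actM; suff /eqP -> : act g E == E by [].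
by move: gA; rewrite inE.
Qed.

(* Orbit counting: permutations indexed by T moving E to pairwise distinct
   edge sets lie in distinct cosets of Aut(H), so |Aut(H)| * |T| <= m!. *)
Lemma card_hypAut_mul_le m (E : {set {set 'I_m}}) (T : {set 'I_m})
    (s : 'I_m -> {perm 'I_m}) :
  {in T &, injective (fun x => act (s x) E)} -> #|hypAut E| * #|T| <= m`!.
Proof.
move=> s_inj.
pose F (p : {perm 'I_m} * 'I_m) := (p.1 * s p.2)%g.
have F_inj : {in setX (hypAut E) T &, injective F}.
  move=> [g x] [h y] /setXP [gA xT] /setXP [hA yT]; rewrite /F /= => eqF.
  have xy : x = y.
    apply: s_inj => //=.
    by rewrite -(act_hypAutM (s x) gA) -(act_hypAutM (s y) hA) eqF.
  by subst y; congr pair; apply: (mulIg (s x)).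
rewrite -cardsX -(card_in_imset F_inj).
by apply: leq_trans (max_card _) _; rewrite card_Sn.
Qed.

Lemma link_act m (s : {perm 'I_m}) (S : {set 'I_m}) (E : {set {set 'I_m}}) z :
  {in S, forall u, s u = u} -> (z |: S \in act s E) = ((s^-1)%g z |: S \in E).
Proof.
move=> fix_s.
have -> : z |: S = s @: ((s^-1)%g z |: S).
  by rewrite imsetU1 permKV (eq_in_imset fix_s) imset_id.
by rewrite /act mem_imset //; apply: imset_inj; apply: perm_inj.
Qed.

(* Induction on the distance |e \ f| from an edge e
   to the non-edge f: swapping x in e \ f for y in f \ e either gives a
   non-edge (then S = e - x works) or an edge closer to f. *)
Lemma exchange_witness m k (E : {set {set 'I_m}}) (e f : {set 'I_m}) :
  k_uniform k E -> e \in E -> f \notin E -> #|f| = k ->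
  exists (S : {set 'I_m}) (a b : 'I_m), [/\ a \notin S, b \notin S, #|S| = k.-1,
                    a |: S \in E & b |: S \notin E].
Proof.
move=> k_unif eE fE fk; move: {2}#|e :\: f| (leqnn #|e :\: f|) => n le_ef.
elim: n e le_ef eE => [|n IH] e le_ef eE.
  have : e \subset f by rewrite -setD_eq0 -cards_eq0 -leqn0.
  move=> sub_ef; suff efeq : e = f by rewrite -efeq eE in fE.
  by apply/eqP; rewrite eqEcard sub_ef fk (k_unif _ eE) leqnn.
have ek := k_unif _ eE.
have ne_ef : e != f by apply: contraNneq fE => <-.
have [x xef] : exists x, x \in e :\: f.
  apply/set0Pn; apply: contraNneq ne_ef => /eqP; rewrite setD_eq0 => sub_ef.
  by rewrite eqEcard sub_ef fk ek leqnn.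
have [y yfe] : exists y, y \in f :\: e.
  apply/set0Pn; apply: contraNneq ne_ef => /eqP; rewrite setD_eq0 => sub_fe.
  by rewrite eq_sym eqEcard sub_fe fk ek leqnn.
move: (xef) (yfe); rewrite !inE => /andP [xNf xe] /andP [yNe yf].
have card_ex : #|e :\ x| = k.-1 by have := cardsD1 x e; rewrite xe ek; lia.
case: (boolP (y |: (e :\ x) \in E)) => gE; last first.
  exists (e :\ x), x, y; split => //; first by rewrite !inE eqxx.
  - by rewrite !inE (negbTE yNe) andbF.
  - by rewrite setD1K.
apply: (IH _ _ gE).
have -> : (y |: (e :\ x)) :\: f = (e :\: f) :\ x.
  apply/setP => z; rewrite !inE.
  case: (z =P y) => [->|_] /=; first by rewrite yf /= andbF.
  by case: (z \in f); case: (z != x).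
by move: le_ef; rewrite (cardsD1 x (e :\: f)) xef; lia.
Qed.

Section Separation.

(* P plays the role of the link of S; a is in P and b is not. *)
Variables (m : nat) (P : {set 'I_m}) (a b : 'I_m).

Definition sep (x : 'I_m) : {perm 'I_m} :=
  if x \in P then (if x == a then 1%g else tperm x b) else tperm a x.

Lemma sepV x : ((sep x)^-1)%g = sep x.
Proof. by rewrite /sep; case: ifP => _; [case: ifP => _|]; rewrite ?invg1 ?tpermV. Qed.

Lemma sep_fix x u : u != a -> u != b -> u != x -> sep x u = u.
Proof.
move=> ua ub ux; rewrite /sep.
by case: ifP => _; [case: ifP => _|]; rewrite ?perm1 // tpermD // eq_sym.
Qed.

Hypotheses (aP : a \in P) (bNP : b \notin P).

(* The preimage of P under sep x determines x: it is P itself for x = a,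
   P - x + b for x in P - a, and P - a + x for x outside P. *)
Lemma sep_link_inj x y :
  (forall z, (sep x z \in P) = (sep y z \in P)) -> x = y.
Proof.
have ba : b != a by apply: contraNneq bNP => ->.
wlog xP : x y / x \in P.
  move=> wlog_xP same; case: (boolP (x \in P)) => xP; first exact: wlog_xP.
  case: (boolP (y \in P)) => yP; first by apply/esym/wlog_xP => // z; rewrite same.
  apply/eqP; apply: contraT => xy.
  have ax : a != x by apply: contraNneq xP => <-.
  move: (same x); rewrite /sep (negbTE xP) (negbTE yP) tpermR tpermD //.
  - by rewrite aP (negbTE xP).
  - by rewrite eq_sym.
move=> same; apply/eqP; apply: contraT => xy; move: same; rewrite /sep xP.
have xb : x != b by apply: contraNneq bNP => <-.
case: (x =P a) => [xa | /eqP xa].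
  subst x; case: (boolP (y \in P)) => yP.
    by rewrite eq_sym (negbTE xy) => /(_ b); rewrite perm1 tpermR yP (negbTE bNP).
  by move=> /(_ a); rewrite perm1 tpermL aP (negbTE yP).
case: (boolP (y \in P)) => yP.
  case: (y =P a) => [ya | /eqP ya].
    by subst y => /(_ b); rewrite tpermR perm1 xP (negbTE bNP).
  by move=> /(_ x); rewrite tpermL (negbTE bNP) tpermD ?xP // eq_sym.
by move=> /(_ a); rewrite tpermL (negbTE yP) tpermD ?aP // eq_sym.
Qed.

End Separation.

Theorem theorem3p4 (m k : nat) (E : {set {set 'I_m}}) :
  1 <= k -> k < m ->
  k_uniform k E ->
  E != set0 ->
  (exists e : {set 'I_m}, #|e| = k /\ e \notin E) ->
  #|hypAut E| * (m - k + 1) <= m`!.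
Proof.
move=> k_ge1 k_lt_m k_unif /set0Pn [e eE] [f [fk fE]].
have [S [a [b [aS bS Sk aE bE]]]] := exchange_witness k_unif eE fE fk.
pose P := [set z | z |: S \in E].
have aP : a \in P by rewrite inE.
have bNP : b \notin P by rewrite inE.
have sep_fixS x : x \notin S -> {in S, forall u, sep P a b x u = u}.
  by move=> xS u uS; apply: sep_fix; apply: contraTneq uS => ->.
have cardT : #|~: S| = m - k + 1 by have := cardsC S; rewrite card_ord Sk; lia.
rewrite -cardT; apply: (card_hypAut_mul_le (s := sep P a b)).
move=> x y; rewrite !inE => xS yS same_act.
apply: (sep_link_inj aP bNP) => z.
have same_link : (z |: S \in act (sep P a b x) E) = (z |: S \in act (sep P a b y) E).
  by rewrite same_act.
move: same_link.
by rewrite (link_act _ _ (sep_fixS _ xS)) (link_act _ _ (sep_fixS _ yS)) !sepV !inE.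
Qed.
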